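(* For all integers $n\ge 3$ and $k\ge 1$, $\mathrm{mur}(kC_n)=kn-2k-1$, where $kC_n$ is the vertex-disjoint union of $k$ copies of the cycle $C_n$ on $n$ vertices.
   Context: For a finite simple undirected graph $G$ on vertices $v_1,\dots,v_n$, let $A_G$ be its $(0,1)$-adjacency matrix, $D_G=\mathrm{diag}(d_1,\dots,d_n)$ with $d_i$ the degree of $v_i$, $I$ the $n\times n$ identity matrix and $J$ the $n\times n$ all-ones matrix. A universal adjacency matrix of $G$ is any matrix $\alpha A_G+\beta I+\gamma J+\delta D_G$ with real scalars $\alpha,\beta,\gamma,\delta$ and $\alpha\neq 0$. The minimum universal rank $\mathrm{mur}(G)$ is the minimum rank over all universal adjacency matrices of $G$. *)

From mathcomp Require Import all_boot all_order all_algebra.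
From mathcomp Require Import reals.
Set Implicit Arguments. Unset Strict Implicit. Unset Printing Implicit Defensive.
Import Order.TTheory GRing.Theory Num.Theory.
Local Open Scope ring_scope.

(* A finite simple graph on vertex set 'I_N is given by a symmetric,
   irreflexive boolean relation e. *)

Definition adj_mx (R : realType) (N : nat) (e : rel 'I_N) : 'M[R]_N :=
  \matrix_(i, j) (e i j)%:R.

Definition deg (N : nat) (e : rel 'I_N) (i : 'I_N) : nat := #|[set j | e i j]|.

Definition deg_mx (R : realType) (N : nat) (e : rel 'I_N) : 'M[R]_N :=
  \matrix_(i, j) ((i == j)%:R * (deg e i)%:R).

Definition univ_adj_mx (R : realType) (N : nat) (e : rel 'I_N)
    (a b c d : R) : 'M[R]_N :=
  a *: adj_mx R e + b%:M + c *: const_mx 1 + d *: deg_mx R e.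

Definition mur_is (R : realType) (N : nat) (e : rel 'I_N) (r : nat) : Prop :=
  (exists a b c d : R, a != 0 /\ \rank (univ_adj_mx e a b c d) = r) /\
  (forall a b c d : R, a != 0 -> (r <= \rank (univ_adj_mx e a b c d))%N).

(* k C_n : vertex v of 'I_(k*n) lies in copy v %/ n at position v %% n;
   two vertices are adjacent iff they lie in the same copy and their
   positions differ by 1 modulo n. *)
Definition kCn_rel (k n : nat) : rel 'I_(k * n) :=
  fun u v => ((u %/ n == v %/ n) &&
              (((u %% n).+1 %% n == v %% n) || ((v %% n).+1 %% n == u %% n)))%N.

From mathcomp Require Import all_boot all_order all_algebra.
From mathcomp Require Import reals trigo.
From mathcomp Require Import zify ring lra.
Set Implicit Arguments. Unset Strict Implicit. Unset Printing Implicit Defensive.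
Import Order.TTheory GRing.Theory Num.Theory.
Local Open Scope ring_scope.

(* Upper bound: for theta = 2 pi / n the vectors p |-> cos (p theta) and
   p |-> sin (p theta), supported on one copy of C_n, are eigenvectors of the
   adjacency matrix A for 2 cos theta <> 2, hence orthogonal to the all-ones
   vector; choosing gamma so that the all-ones vector lies in the kernel too,
   A - 2 cos theta I + gamma J has 2k + 1 independent kernel vectors.
   Lower bound: removing gamma J changes the rank by at most one, and the
   submatrix of alpha A + beta I + delta D with rows (copy q, position s) and
   columns (q, s + 1), s < n - 2, is triangular with diagonal alpha <> 0. *)

Lemma divmodnMDl (n q r : nat) : (r < n)%N ->
  ((q * n + r) %/ n = q /\ (q * n + r) %% n = r)%N.
Proof.
move=> lt_rn; have n_gt0 : (0 < n)%N by apply: leq_ltn_trans lt_rn.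
by rewrite divnMDl // divn_small // addn0 modnMDl modn_small.
Qed.

Lemma eqn_divmod (n m q r : nat) : (r < n)%N ->
  ((m == q * n + r) = (m %/ n == q) && (m %% n == r))%N.
Proof.
move=> lt_rn; apply/eqP/andP => [->|[/eqP <- /eqP <-]]; last exact: divn_eq.
by have [-> ->] := divmodnMDl q lt_rn.
Qed.

Lemma eqn_modS (n s r : nat) : (s < n)%N -> (r < n)%N ->
  (s.+1 %% n == r)%N = (s == (r + n.-1) %% n)%N.
Proof.
move=> lt_sn lt_rn; have n_gt0 : (0 < n)%N by apply: leq_ltn_trans lt_sn.
rewrite -{1}(modn_small lt_rn) -(eqn_modDr n.-1) addSn -addnS prednK //.
by rewrite modnDr (modn_small lt_sn).
Qed.

Lemma sum_mul_nat_delta (R : nzSemiRingType) N (F : 'I_N -> R) a (lt_aN : (a < N)%N) :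
  \sum_i F i * (i == a :> nat)%:R = F (Ordinal lt_aN).
Proof.
rewrite (bigD1 (Ordinal lt_aN)) //= eqxx mulr1 big1 ?addr0 // => i.
by rewrite -val_eqE /= => /negbTE ->; rewrite mulr0.
Qed.

Lemma mxrank_mxsub (F : fieldType) m1 n1 m2 n2 (f : 'I_m2 -> 'I_m1)
    (g : 'I_n2 -> 'I_n1) (A : 'M[F]_(m1, n1)) :
  (\rank (mxsub f g A) <= \rank A)%N.
Proof.
have -> : mxsub f g A = rowsub f 1%:M *m A *m colsub g 1%:M.
  by rewrite mul_rowsub_mx mul1mx -mxsub_mul mulmx1.
exact: leq_trans (mxrankM_maxl _ _) (mxrankM_maxr _ _).
Qed.

Lemma mxrank_const_le1 (F : fieldType) m n (a : F) :
  (\rank (const_mx a : 'M_(m, n)) <= 1)%N.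
Proof.
have -> : const_mx a = (const_mx a : 'M_(m, 1)) *m (const_mx 1 : 'M_(1, n)).
  by apply/matrixP => i j; rewrite !mxE big_ord1 !mxE mulr1.
exact: leq_trans (mxrankM_maxl _ _) (rank_leq_col _).
Qed.

Lemma mxrank_addJ (F : fieldType) N (A : 'M[F]_N) (c : F) :
  (\rank A <= \rank (A + c *: const_mx 1)%R + 1)%N.
Proof.
rewrite -{1}(addrK (c *: const_mx 1) A).
have -> : - (c *: const_mx 1) = const_mx (- c) :> 'M_N.
  by apply/matrixP => i j; rewrite !mxE mulr1.
apply: leq_trans (mxrank_add _ _) _.
by rewrite leq_add2l mxrank_const_le1.
Qed.

Lemma sin_neq0_cos_neq1 (R : realType) (x : R) : sin x != 0 -> cos x != 1.
Proof.
apply: contraNneq => cos1; have := sin2cos2 x.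
by rewrite cos1 expr1n subrr => /eqP; rewrite sqrf_eq0.
Qed.

Lemma cos_sin_combination_eq0 (R : realType) (x a b c : R) : sin x != 0 ->
  a + c = 0 -> a * cos x + b * sin x + c = 0 -> a * cos x - b * sin x + c = 0 ->
  [/\ a = 0, b = 0 & c = 0].
Proof.
move=> sin_neq0 e0 e1 e2.
have a_eq0 : a = 0.
  have /eqP : a * (cos x - 1) = 0 by lra.
  by rewrite mulf_eq0 subr_eq0 (negbTE (sin_neq0_cos_neq1 sin_neq0)) orbF => /eqP.
have c_eq0 : c = 0 by lra.
split=> //; apply/eqP; move: e1; rewrite a_eq0 c_eq0 mul0r add0r addr0 => /eqP.
by rewrite mulf_eq0 (negbTE sin_neq0) orbF.
Qed.

Definition cyc_angle (R : realType) (n : nat) : R := pi *+ 2 / n%:R.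

Section CycAngle.
Variables (R : realType) (n : nat).
Hypothesis n_gt0 : (0 < n)%N.
Local Notation theta := (cyc_angle R n).

Lemma natr_mul_cyc_angle : n%:R * theta = pi *+ 2.
Proof. by rewrite /cyc_angle mulrC divfK // pnatr_eq0 -lt0n. Qed.

Lemma periodic_modn_cyc_angle (f : R -> R) m : periodic f (pi *+ 2) ->
  f ((m %% n)%:R * theta) = f (m%:R * theta).
Proof.
move=> f_per; rewrite {2}(divn_eq m n) natrD natrM mulrDl -mulrA.
by rewrite natr_mul_cyc_angle addrC [_%:R * (pi *+ 2)]mulr_natl periodicn.
Qed.

Lemma natr_pred_mul_cyc_angle : n.-1%:R * theta = - theta + pi *+ 2.
Proof.
have n_pred : n%:R = n.-1%:R + 1 :> R by rewrite natr1 prednK.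
by rewrite -natr_mul_cyc_angle n_pred; ring.
Qed.

(* For [f = cos, sin]: [p |-> f (p theta)] is an eigenvector of the cycle
   for the eigenvalue [2 cos theta]. *)
Lemma cyc_angle_recurrence (f : R -> R) s : periodic f (pi *+ 2) ->
    (forall x y, f (x + y) + f (x - y) = 2 * cos y * f x) ->
  f ((s.+1 %% n)%:R * theta) + f (((s + n.-1) %% n)%:R * theta)
    = 2 * cos theta * f (s%:R * theta).
Proof.
move=> f_per f_add; rewrite !periodic_modn_cyc_angle // -f_add.
have -> : (s + n.-1)%:R * theta = s%:R * theta - theta + pi *+ 2.
  by rewrite natrD mulrDl natr_pred_mul_cyc_angle addrA.
by rewrite f_per -natr1 mulrDl mul1r.
Qed.

End CycAngle.

Lemma sin_cyc_angle_gt0 (R : realType) n : (3 <= n)%N -> 0 < sin (cyc_angle R n).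
Proof.
move=> n_ge3; have n_gt0 : 0 < n%:R :> R by rewrite ltr0n; lia.
have pi2_gt0 : 0 < pi *+ 2 :> R by rewrite mulrn_wgt0 // pi_gt0.
apply: sin_gt0_pi; rewrite /cyc_angle divr_gt0 // ltr_pdivrMr //.
by rewrite -[pi *+ 2]mulr_natr ltr_pM2l ?pi_gt0 // ltr_nat; lia.
Qed.

Section CycleUnion.
Variables (k n : nat).
Hypothesis n_ge3 : (3 <= n)%N.
Local Notation N := (k * n)%N.
Local Notation kCn := (@kCn_rel k n).

Let n_gt0 : (0 < n)%N. Proof. lia. Qed.

Definition cyc_succ (v : nat) : nat := (v %/ n * n + (v %% n).+1 %% n)%N.
Definition cyc_pred (v : nat) : nat := (v %/ n * n + (v %% n + n.-1) %% n)%N.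

Lemma cyc_succ_divmod v :
  (cyc_succ v %/ n = v %/ n /\ cyc_succ v %% n = (v %% n).+1 %% n)%N.
Proof. by apply: divmodnMDl; rewrite ltn_mod. Qed.

Lemma cyc_pred_divmod v :
  (cyc_pred v %/ n = v %/ n /\ cyc_pred v %% n = (v %% n + n.-1) %% n)%N.
Proof. by apply: divmodnMDl; rewrite ltn_mod. Qed.

Lemma ltn_vertex q s : (q < k)%N -> (s < n)%N -> (q * n + s < N)%N.
Proof. by move=> lt_qk lt_sn; nia. Qed.

Lemma cyc_succ_lt (j : 'I_N) : (cyc_succ j < N)%N.
Proof. by apply: ltn_vertex; rewrite ?ltn_divLR ?ltn_mod. Qed.

Lemma cyc_pred_lt (j : 'I_N) : (cyc_pred j < N)%N.
Proof. by apply: ltn_vertex; rewrite ?ltn_divLR ?ltn_mod. Qed.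

Lemma cyc_succ_neq_pred v : cyc_succ v != cyc_pred v.
Proof.
rewrite eqn_add2l; have lt_vn : (v %% n < n)%N by rewrite ltn_mod.
have -> : (v %% n + n.-1 = (n - 2) + (v %% n).+1)%N by lia.
by rewrite -{1}(add0n (v %% n).+1) eqn_modDr mod0n modn_small; lia.
Qed.

Lemma kCn_relE (i j : 'I_N) :
  kCn i j = (i == cyc_succ j :> nat) || (i == cyc_pred j :> nat).
Proof.
rewrite /kCn_rel !eqn_divmod ?ltn_mod // eqn_modS ?ltn_mod //.
by rewrite [((j %% n).+1 %% n == _)%N]eq_sym -andb_orr orbC.
Qed.

Lemma kCn_relC (i j : 'I_N) : kCn i j = kCn j i.
Proof. by rewrite /kCn_rel eq_sym orbC. Qed.

Lemma sum_kCn_col (S : nzSemiRingType) (f : nat -> S) (j : 'I_N) :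
  \sum_(i < N) f i * (kCn i j)%:R = f (cyc_succ j) + f (cyc_pred j).
Proof.
rewrite -(sum_mul_nat_delta (fun i : 'I_N => f i) (cyc_succ_lt j)).
rewrite -(sum_mul_nat_delta (fun i : 'I_N => f i) (cyc_pred_lt j)) -big_split /=.
apply: eq_bigr => i _; rewrite kCn_relE -mulrDr -natrD.
congr (_ * _%:R); case: eqP => [->|//].
by rewrite (negbTE (cyc_succ_neq_pred j)).
Qed.

Variable R : realType.
Local Notation A := (adj_mx R kCn).
Local Notation J := (const_mx 1 : 'M[R]_N).

Lemma row_mul_adj (f : nat -> R) :
  \row_(j < N) f j *m A = \row_(j < N) (f (cyc_succ j) + f (cyc_pred j)).
Proof.
apply/rowP => j; rewrite !mxE -sum_kCn_col.
by apply: eq_bigr => i _; rewrite !mxE.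
Qed.

Lemma adj_mul_J : A *m J = 2 *: J.
Proof.
apply/matrixP => i j; rewrite !mxE mulr1.
transitivity (\sum_(l < N) (fun=> 1 : R) l * (kCn l i)%:R).
  by apply: eq_bigr => l _; rewrite !mxE mulr1 mul1r kCn_relC.
exact: (sum_kCn_col (fun=> 1 : R) i).
Qed.

Lemma mul_univ_adj (u : 'rV[R]_N) (b c : R) :
  u *m univ_adj_mx kCn 1 b c 0 = u *m A + b *: u + c *: (u *m J).
Proof.
by rewrite /univ_adj_mx scale1r scale0r addr0 !mulmxDr mul_mx_scalar scalemxAr.
Qed.

Lemma ones_mul_univ_adj (b c : R) :
  (const_mx 1 : 'rV_N) *m univ_adj_mx kCn 1 b c 0 = (2 + b + c * N%:R) *: const_mx 1.
Proof.
have -> : const_mx 1 = \row_(j < N) (fun=> 1 : R) j by apply/rowP => j; rewrite !mxE.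
rewrite mul_univ_adj (row_mul_adj (fun=> 1)); apply/rowP => j; rewrite !mxE.
rewrite (eq_bigr (fun=> 1)) => [|i _]; last by rewrite !mxE mulr1.
by rewrite sumr_const card_ord; ring.
Qed.

Lemma eigenrow_mul_univ_adj (lam c : R) (f : nat -> R) : lam != 2 ->
    (forall j : 'I_N, f (cyc_succ j) + f (cyc_pred j) = lam * f j) ->
  \row_(j < N) f j *m univ_adj_mx kCn 1 (- lam) c 0 = 0.
Proof.
move=> lam_neq2 f_eig; set u := \row_(j < N) f j.
have uA : u *m A = lam *: u by rewrite row_mul_adj; apply/rowP => j; rewrite !mxE f_eig.
have uJ : u *m J = 0.
  have /eqP : (lam - 2) *: (u *m J) = 0.
    rewrite scalerBl scalemxAl -uA -mulmxA adj_mul_J -scalemxAr.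
    by rewrite subrr.
  by rewrite scaler_eq0 subr_eq0 (negbTE lam_neq2) => /eqP.
by rewrite mul_univ_adj uA uJ scaler0 addr0 scaleNr addrN.
Qed.

Local Notation theta := (cyc_angle R n).

Definition cyc_wave (f : R -> R) (t v : nat) : R :=
  f ((v %% n)%:R * theta) * (t == v %/ n)%N%:R.

Definition wave_mx (f : R -> R) : 'M[R]_(k, N) := \matrix_(t, j) cyc_wave f t j.

Definition wave_basis : 'M[R]_(k + k + 1, N) :=
  col_mx (col_mx (wave_mx cos) (wave_mx sin)) (const_mx 1).

Lemma cos_cyc_angle_neq1 : cos theta != 1.
Proof. by rewrite sin_neq0_cos_neq1 // gt_eqF // sin_cyc_angle_gt0. Qed.

Lemma wave_mx_mul_univ_adj (f : R -> R) (c : R) : periodic f (pi *+ 2) ->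
    (forall x y, f (x + y) + f (x - y) = 2 * cos y * f x) ->
  wave_mx f *m univ_adj_mx kCn 1 (- (2 * cos theta)) c 0 = 0.
Proof.
move=> f_per f_add; apply/row_matrixP => t; rewrite row_mul row0.
have -> : row t (wave_mx f) = \row_(j < N) cyc_wave f t j.
  by apply/rowP => j; rewrite !mxE.
apply: eigenrow_mul_univ_adj => [|j].
  by apply: contra_neq cos_cyc_angle_neq1 => ?; lra.
rewrite /cyc_wave; have [-> ->] := cyc_succ_divmod j.
have [-> ->] := cyc_pred_divmod j.
by rewrite -mulrDl cyc_angle_recurrence // mulrA.
Qed.

Lemma wave_basis_mul_univ_adj : (0 < k)%N ->
  wave_basis *m univ_adj_mx kCn 1 (- (2 * cos theta))
                  ((2 * cos theta - 2) / N%:R) 0 = 0.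
Proof.
move=> k_gt0; have N_neq0 : N%:R != 0 :> R by rewrite pnatr_eq0 muln_eq0; lia.
have cos_add (x y : R) : cos (x + y) + cos (x - y) = 2 * cos y * cos x.
  by rewrite cosD cosB; ring.
have sin_add (x y : R) : sin (x + y) + sin (x - y) = 2 * cos y * sin x.
  by rewrite sinD sinB; ring.
rewrite !mul_col_mx (wave_mx_mul_univ_adj _ (@cosD2pi R) cos_add).
rewrite (wave_mx_mul_univ_adj _ (@sinD2pi R) sin_add) ones_mul_univ_adj divfK //.
by rewrite addrA addrNK subrr scale0r !col_mx0.
Qed.

Lemma wave_mx_entry (a : 'rV[R]_k) (f : R -> R) (t : 'I_k) p (lt_pn : (p < n)%N) :
  (a *m wave_mx f) 0 (Ordinal (ltn_vertex (ltn_ord t) lt_pn)) = a 0 t * f (p%:R * theta).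
Proof.
rewrite !mxE; under eq_bigr do rewrite mxE /cyc_wave /= mulrA.
have [-> ->] := divmodnMDl t lt_pn.
rewrite (sum_mul_nat_delta (fun t' => a 0 t' * _) (ltn_ord t)).
by congr (a 0 _ * _); apply: val_inj.
Qed.

Lemma wave_combination_eq0 (a b : 'rV[R]_k) (c : 'rV[R]_1) : (0 < k)%N ->
  a *m wave_mx cos + b *m wave_mx sin + c *m const_mx 1 = 0 ->
  [/\ a = 0, b = 0 & c = 0].
Proof.
move=> k_gt0 comb_eq0.
have coef_eq0 (t : 'I_k) : [/\ a 0 t = 0, b 0 t = 0 & c 0 0 = 0].
  have comb_at p (lt_pn : (p < n)%N) :
      a 0 t * cos (p%:R * theta) + b 0 t * sin (p%:R * theta) + c 0 0 = 0.
    pose j := Ordinal (ltn_vertex (ltn_ord t) lt_pn).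
    have := congr1 (fun M : 'rV[R]_N => M 0 j) comb_eq0.
    by rewrite !mxE -!wave_mx_entry big_ord1 !mxE mulr1.
  apply: (@cos_sin_combination_eq0 _ theta); first by rewrite gt_eqF // sin_cyc_angle_gt0.
  - by have := comb_at 0%N n_gt0; rewrite mul0r cos0 sin0 mulr1 mulr0 addr0.
  - by have := comb_at 1%N (ltnW n_ge3); rewrite mul1r.
  - have lt_pred_n : (n.-1 < n)%N by rewrite ltn_predL.
    have := comb_at _ lt_pred_n; rewrite natr_pred_mul_cyc_angle //.
    by rewrite (cosD2pi (- theta)) (sinD2pi (- theta)) cosN sinN mulrN.
split; apply/rowP => j; rewrite mxE.
- by case: (coef_eq0 j).
- by case: (coef_eq0 j).
- by rewrite (ord1 j); case: (coef_eq0 (Ordinal k_gt0)).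
Qed.

Lemma wave_basis_free : (0 < k)%N -> row_free wave_basis.
Proof.
move=> k_gt0; rewrite -kermx_eq0; apply/eqP/row_matrixP => i; rewrite row0.
set w := row i _; have : w *m wave_basis = 0 by rewrite -row_mul mulmx_ker row0.
rewrite -[w]hsubmxK -[lsubmx w]hsubmxK !mul_row_col.
by case/(wave_combination_eq0 k_gt0) => -> -> ->; rewrite !row_mx0.
Qed.

Lemma rank_univ_adj_cyc_angle : (0 < k)%N ->
  (\rank (univ_adj_mx kCn 1 (- (2 * cos theta)) ((2 * cos theta - 2) / N%:R) 0)
     <= N - (k + k + 1))%N.
Proof.
move=> k_gt0; set U := univ_adj_mx _ _ _ _ _.
have sub_ker : (wave_basis <= kermx U)%MS.
  by rewrite sub_kermx wave_basis_mul_univ_adj.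
have := mxrankS sub_ker; rewrite mxrank_ker (eqP (wave_basis_free k_gt0)).
by have := rank_leq_row U; lia.
Qed.

Lemma kCn_rel_divmod (i j : 'I_N) q q' s s' : (s < n)%N -> (s' < n)%N ->
    val i = (q * n + s)%N -> val j = (q' * n + s')%N ->
  kCn i j = (q == q') && ((s.+1 %% n == s')%N || (s'.+1 %% n == s)%N).
Proof.
move=> lt_sn lt_s'n vi vj; rewrite /kCn_rel vi vj.
by have [-> ->] := divmodnMDl q lt_sn; have [-> ->] := divmodnMDl q' lt_s'n.
Qed.

Local Notation M := (k * (n - 2))%N.

Lemma path_vertex_lt (m : 'I_M) (e : bool) :
  (m %/ (n - 2) * n + (m %% (n - 2) + e) < N)%N.
Proof.
apply: ltn_vertex; first by rewrite ltn_divLR ?ltn_ord //; lia.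
have : (m %% (n - 2) < n - 2)%N by rewrite ltn_mod; lia.
case: e; lia.
Qed.

(* Rows [path_vertex false] and columns [path_vertex true] of the submatrix
   pair the first [n - 2] vertices of each copy with their successors. *)
Definition path_vertex (e : bool) (m : 'I_M) : 'I_N := Ordinal (path_vertex_lt m e).

Lemma path_vertex_rel (m m' : 'I_M) : (m <= m')%N ->
  path_vertex false m != path_vertex true m' /\
  kCn (path_vertex false m) (path_vertex true m') = (m == m').
Proof.
move=> le_mm'; set d := (n - 2)%N; have d_add2 : d.+2 = n by rewrite /d; lia.
have lt_d (l : 'I_M) : (l %% d < d)%N by rewrite ltn_mod; lia.
have [lt_md lt_m'd] := (lt_d m, lt_d m').
have le_mod : (m %/ d = m' %/ d)%N -> (m %% d <= m' %% d)%N.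
  by move=> e; move: le_mm'; rewrite {1}(divn_eq m d) {1}(divn_eq m' d) e leq_add2l.
have -> : (m == m') = (m %/ d == m' %/ d)%N && (m %% d == m' %% d)%N.
  by rewrite -val_eqE /= {1}(divn_eq m' d) eqn_divmod.
split.
  rewrite -val_eqE /= -/d addn0 addn1 eqn_divmod; last lia.
  have lt_mn : (m %% d < n)%N by lia.
  have [-> ->] := divmodnMDl (m %/ d) lt_mn.
  by case: eqP => //= /le_mod; lia.
rewrite (@kCn_rel_divmod _ _ (m %/ d) (m' %/ d) (m %% d) (m' %% d).+1) /=;
  [|lia|lia|by rewrite addn0|by rewrite addn1].
have lt_m1n : ((m %% d).+1 < n)%N by lia.
have lt_m'2n : ((m' %% d).+2 < n)%N by lia.
rewrite (modn_small lt_m1n) (modn_small lt_m'2n).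
by case: eqP => //= /le_mod; lia.
Qed.

Lemma mxrank_adj_deg_ge (a b d : R) : a != 0 ->
  (M <= \rank (a *: adj_mx R kCn + b%:M + d *: deg_mx R kCn)%R)%N.
Proof.
move=> a_neq0.
pose S := mxsub (path_vertex false) (path_vertex true)
  (a *: adj_mx R kCn + b%:M + d *: deg_mx R kCn).
have S_upper (m m' : 'I_M) : (m <= m')%N -> S m m' = a * (m == m')%:R.
  move=> le_mm'; have [neq_vertex adj] := path_vertex_rel le_mm'.
  by rewrite !mxE (negbTE neq_vertex) mulr0n mul0r mulr0 !addr0 adj.
have S_trig : is_trig_mx S.
  apply/is_trig_mxP => m m' lt_mm'.
  by rewrite S_upper ?(ltnW lt_mm') // -val_eqE (ltn_eqF lt_mm') mulr0.
have S_unit : S \in unitmx.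
  rewrite unitmxE det_trig // (eq_bigr (fun=> a)) => [|m _].
    by rewrite prodr_const unitfE expf_neq0.
  by rewrite S_upper // eqxx mulr1.
by rewrite -[X in (X <= _)%N](mxrank_unit S_unit) mxrank_mxsub.
Qed.

Lemma mxrank_univ_adj_ge (a b c d : R) : a != 0 ->
  (N - 2 * k - 1 <= \rank (univ_adj_mx kCn a b c d))%N.
Proof.
move=> a_neq0; have -> : univ_adj_mx kCn a b c d
    = a *: adj_mx R kCn + b%:M + d *: deg_mx R kCn + c *: const_mx 1.
  by rewrite /univ_adj_mx addrAC.
rewrite leq_subLR addnC [(2 * k)%N]mulnC -mulnBr.
exact: leq_trans (mxrank_adj_deg_ge b d a_neq0) (mxrank_addJ _ c).
Qed.

End CycleUnion.

Theorem corollary12 (R : realType) (n k : nat) :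
  (3 <= n)%N -> (1 <= k)%N ->
  mur_is R (@kCn_rel k n) (k * n - 2 * k - 1).
Proof.
move=> n_ge3 k_gt0; split=> [|a b c d]; last exact: mxrank_univ_adj_ge.
set lam := 2 * cos (cyc_angle R n).
exists 1, (- lam), ((lam - 2) / (k * n)%:R), 0; split; first exact: oner_neq0.
apply/eqP; rewrite eqn_leq mxrank_univ_adj_ge ?oner_neq0 // andbT.
apply: leq_trans (rank_univ_adj_cyc_angle n_ge3 R k_gt0) _; lia.
Qed.
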